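(* In the standing setup, with the convention $x_\infty:=x_{\infty+1}:=0$, we have for all $1\le m<n\le\infty$: $$0\le\big\langle x_{m+1}-x_{n+1},\,(x_m-x_{m+1})-(x_n-x_{n+1})\big\rangle.$$
   Context: Standing setup. $X$ is a real Hilbert space. $u\colon[0,\infty)\to X$ satisfies $\langle u(s),u(t)\rangle=\exp(-(s-t)^2)$ for all $s,t\ge0$. $(d_n)_{n\ge1}$ satisfies: $d_n>0$, $\sum_k d_k^2<\infty$, $t_n:=\sum_{k=1}^{n-1}d_k\to+\infty$, $d_1\le1/8$, $d_{n+1}\le d_n/(1+64d_n^2)$ for all $n$. $\rho_1:=1$, $\rho_{n+1}:=\rho_n\exp(-d_n^2)$, $x_n:=\rho_nu(t_n)$. *)

From Stdlib Require Import Reals Lra.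
Open Scope R_scope.

Record RealHilbertSpace := {
  hcar :> Type;
  hzero : hcar;
  hadd : hcar -> hcar -> hcar;
  hopp : hcar -> hcar;
  hscal : R -> hcar -> hcar;
  hinner : hcar -> hcar -> R;
  hadd_assoc : forall x y z, hadd x (hadd y z) = hadd (hadd x y) z;
  hadd_comm : forall x y, hadd x y = hadd y x;
  hadd_zero : forall x, hadd x hzero = x;
  hadd_opp : forall x, hadd x (hopp x) = hzero;
  hscal_one : forall x, hscal 1 x = x;
  hscal_mul : forall a b x, hscal a (hscal b x) = hscal (a * b) x;
  hscal_addr : forall a x y, hscal a (hadd x y) = hadd (hscal a x) (hscal a y);
  hscal_addl : forall a b x, hscal (a + b) x = hadd (hscal a x) (hscal b x);
  hinner_sym : forall x y, hinner x y = hinner y x;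
  hinner_addl : forall x y z, hinner (hadd x y) z = hinner x z + hinner y z;
  hinner_scall : forall a x y, hinner (hscal a x) y = a * hinner x y;
  hinner_pos : forall x, 0 <= hinner x x;
  hinner_def : forall x, hinner x x = 0 -> x = hzero;
  hcomplete : forall s : nat -> hcar,
    (forall eps, eps > 0 -> exists N, forall p q, (p >= N)%nat -> (q >= N)%nat ->
        sqrt (hinner (hadd (s p) (hopp (s q))) (hadd (s p) (hopp (s q)))) < eps) ->
    exists l, forall eps, eps > 0 -> exists N, forall p, (p >= N)%nat ->
        sqrt (hinner (hadd (s p) (hopp l)) (hadd (s p) (hopp l))) < eps
}.

Arguments hzero {_}.
Arguments hadd {_}.
Arguments hopp {_}.
Arguments hinner {_}.

Definition hsub {X : RealHilbertSpace} (x y : X) : X := hadd x (hopp y).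

(* t_n := sum_{k=1}^{n-1} d_k  (for n >= 1; the value at n = 0 is irrelevant) *)
Fixpoint tseq (d : nat -> R) (n : nat) : R :=
  match n with
  | O => 0
  | S p => match p with O => 0 | _ => tseq d p + d p end
  end.

Fixpoint rhoseq (d : nat -> R) (n : nat) : R :=
  match n with
  | O => 1
  | S p => match p with O => 1 | _ => rhoseq d p * exp (- (d p) ^ 2) end
  end.

Definition xseq {X : RealHilbertSpace} (u : R -> X) (d : nat -> R) (n : nat) : X :=
  hscal X (rhoseq d n) (u (tseq d n)).

From Stdlib Require Import Reals Lra Lia Psatz.
Open Scope R_scope.

(* Since rho_(k+1) = rho_k e^(-d_k^2), the vectors satisfy
   <x_(k+1), x_k> = |x_(k+1)|^2, and the inner product collapses to
   rho_(m+1) rho_(n+1) e^(-D^2) (2 - e^(2 D d_n) - e^(-2 D d_m)) with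
   D = t_(n+1) - t_(m+1).  The recursion for d gives
   1/d_(k+1) >= 1/d_k + 64 d_k, hence 64 D d_m d_n <= d_m - d_n, and
   e^a + e^(-b) <= 1/(1-a) + 1/(1+b) <= 2 as soon as 2ab <= b - a. *)

Lemma exp_opp_le_inv x : -1 < x -> exp (- x) <= / (1 + x).
Proof.
  intros Hx. rewrite exp_Ropp.
  apply Rinv_le_contravar; [lra | apply exp_ineq1_le].
Qed.

Lemma exp_add_exp_opp_le_2 a b :
  0 <= a -> 0 <= b -> 2 * a * b <= b - a -> exp a + exp (- b) <= 2.
Proof.
  intros Ha Hb Hab.
  assert (Ha1 : a < 1) by nra.
  pose proof (exp_opp_le_inv (- a) ltac:(lra)) as Ea.
  pose proof (exp_opp_le_inv b ltac:(lra)) as Eb.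
  rewrite Ropp_involutive in Ea.
  assert (E : 2 - (/ (1 + - a) + / (1 + b))
              = (b - a - 2 * a * b) / ((1 - a) * (1 + b))) by (field; lra).
  assert (0 <= (b - a - 2 * a * b) / ((1 - a) * (1 + b))).
  { unfold Rdiv. apply Rmult_le_pos; [nra | left; apply Rinv_0_lt_compat; nra]. }
  lra.
Qed.

Section InnerProduct.

Variable X : RealHilbertSpace.

Lemma hinner_zerol (y : X) : hinner hzero y = 0.
Proof.
  pose proof (hinner_addl X hzero hzero y) as H.
  rewrite hadd_zero in H. lra.
Qed.

Lemma hinner_zeror (y : X) : hinner y hzero = 0.
Proof. rewrite hinner_sym. apply hinner_zerol. Qed.

Lemma hinner_oppl (x y : X) : hinner (hopp x) y = - hinner x y.
Proof.
  pose proof (hinner_addl X x (hopp x) y) as H.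
  rewrite hadd_opp, hinner_zerol in H. lra.
Qed.

Lemma hinner_subl (x y z : X) : hinner (hsub x y) z = hinner x z - hinner y z.
Proof. unfold hsub. rewrite hinner_addl, hinner_oppl. ring. Qed.

Lemma hinner_subr (x y z : X) : hinner x (hsub y z) = hinner x y - hinner x z.
Proof. rewrite !(hinner_sym X x), hinner_subl. reflexivity. Qed.

Lemma hinner_scal a b (x y : X) :
  hinner (hscal X a x) (hscal X b y) = a * b * hinner x y.
Proof. rewrite hinner_scall, hinner_sym, hinner_scall, hinner_sym. ring. Qed.

Lemma hinner_sub_increments (a a' b b' : X) :
  hinner a' a = hinner a' a' -> hinner b' b = hinner b' b' ->
  hinner (hsub a' b') (hsub (hsub a a') (hsub b b'))
  = 2 * hinner a' b' - hinner b a' - hinner a b'.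
Proof.
  intros Ha Hb.
  rewrite !hinner_subl, !hinner_subr, Ha, Hb.
  rewrite (hinner_sym X b' a'), (hinner_sym X a' b), (hinner_sym X b' a). ring.
Qed.

End InnerProduct.

Section Steps.

Variable d : nat -> R.
Hypothesis Hdpos : forall n, (1 <= n)%nat -> 0 < d n.
Hypothesis Hdec : forall n, (1 <= n)%nat -> d (S n) <= d n / (1 + 64 * d n ^ 2).

Lemma tseq_S k : (1 <= k)%nat -> tseq d (S k) = tseq d k + d k.
Proof. intros; destruct k; [lia | reflexivity]. Qed.

Lemma rhoseq_S k : (1 <= k)%nat -> rhoseq d (S k) = rhoseq d k * exp (- d k ^ 2).
Proof. intros; destruct k; [lia | reflexivity]. Qed.

Lemma rhoseq_pos n : 0 < rhoseq d n.
Proof.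
  induction n as [|[|n] IH]; try (simpl; lra).
  rewrite rhoseq_S by lia.
  apply Rmult_lt_0_compat; [exact IH | apply exp_pos].
Qed.

Lemma tseq_le m n : (1 <= m)%nat -> (m <= n)%nat -> tseq d m <= tseq d n.
Proof.
  intros Hm Hmn. induction Hmn as [|n Hmn IH]; [lra|].
  rewrite tseq_S by lia. pose proof (Hdpos n ltac:(lia)). lra.
Qed.

Lemma tseq_nonneg n : 0 <= tseq d n.
Proof.
  destruct n as [|n]; [simpl; lra|].
  apply Rle_trans with (tseq d 1); [simpl; lra | apply tseq_le; lia].
Qed.

Lemma rhoseq_exp_shift k s : (1 <= k)%nat ->
  rhoseq d k * exp (- (tseq d k - s) ^ 2)
  = rhoseq d (S k) * exp (- (tseq d (S k) - s) ^ 2)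
    * exp (2 * (tseq d (S k) - s) * d k).
Proof.
  intros Hk. rewrite tseq_S, rhoseq_S by exact Hk.
  rewrite !Rmult_assoc, <- !exp_plus.
  f_equal; f_equal; ring.
Qed.

Lemma inv_d_step n : (1 <= n)%nat -> / d n + 64 * d n <= / d (S n).
Proof.
  intros Hn. pose proof (Hdpos n Hn) as Hx.
  assert (E : / (d n / (1 + 64 * d n ^ 2)) = / d n + 64 * d n).
  { field. split; nra. }
  rewrite <- E. apply Rinv_le_contravar; [apply Hdpos; lia | exact (Hdec n Hn)].
Qed.

Lemma tseq_gap_le_inv m n : (1 <= m)%nat -> (m <= n)%nat ->
  64 * (tseq d n - tseq d m) <= / d n - / d m.
Proof.
  intros Hm Hmn. induction Hmn as [|n Hmn IH]; [lra|].
  rewrite tseq_S by lia. pose proof (inv_d_step n ltac:(lia)). lra.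
Qed.

Lemma tseq_gap_mul_le m n : (1 <= m)%nat -> (m <= n)%nat ->
  64 * (tseq d n - tseq d m) * d m * d n <= d m - d n.
Proof.
  intros Hm Hmn.
  pose proof (Hdpos m Hm). pose proof (Hdpos n ltac:(lia)).
  assert (E : (/ d n - / d m) * d m * d n = d m - d n) by (field; lra).
  rewrite <- E. apply Rmult_le_compat_r; [lra|].
  apply Rmult_le_compat_r; [lra | exact (tseq_gap_le_inv m n Hm Hmn)].
Qed.

Lemma d_antitone m n : (1 <= m)%nat -> (m <= n)%nat -> d n <= d m.
Proof.
  intros Hm Hmn.
  pose proof (tseq_gap_mul_le m n Hm Hmn). pose proof (tseq_le m n Hm Hmn).
  pose proof (Hdpos m Hm). pose proof (Hdpos n ltac:(lia)).
  assert (0 <= (tseq d n - tseq d m) * d m * d n).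
  { apply Rmult_le_pos; [apply Rmult_le_pos|]; lra. }
  lra.
Qed.

End Steps.

Section Vectors.

Variable X : RealHilbertSpace.
Variable u : R -> X.
Variable d : nat -> R.
Hypothesis Hu : forall s t, 0 <= s -> 0 <= t -> hinner (u s) (u t) = exp (- (s - t) ^ 2).
Hypothesis Hdpos : forall n, (1 <= n)%nat -> 0 < d n.

Lemma hinner_xseq i j :
  hinner (xseq u d i) (xseq u d j)
  = rhoseq d i * rhoseq d j * exp (- (tseq d i - tseq d j) ^ 2).
Proof. unfold xseq. rewrite hinner_scal, Hu by (apply tseq_nonneg; exact Hdpos). reflexivity. Qed.

Lemma hinner_xseq_S k : (1 <= k)%nat ->
  hinner (xseq u d (S k)) (xseq u d k) = hinner (xseq u d (S k)) (xseq u d (S k)).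
Proof.
  intros Hk. rewrite !hinner_xseq, (rhoseq_S d k), (tseq_S d k) by exact Hk.
  replace (- (tseq d k + d k - tseq d k) ^ 2) with (- d k ^ 2) by ring.
  replace (- (tseq d k + d k - (tseq d k + d k)) ^ 2) with 0 by ring.
  rewrite exp_0. ring.
Qed.

Lemma hinner_xseq_increments m n : (1 <= m)%nat -> (1 <= n)%nat ->
  let D := tseq d (S n) - tseq d (S m) in
  hinner (hsub (xseq u d (S m)) (xseq u d (S n)))
         (hsub (hsub (xseq u d m) (xseq u d (S m)))
               (hsub (xseq u d n) (xseq u d (S n))))
  = rhoseq d (S m) * rhoseq d (S n) * exp (- D ^ 2)
    * (2 - exp (2 * D * d n) - exp (- (2 * D * d m))).
Proof.
  intros Hm Hn D.
  rewrite hinner_sub_increments by (apply hinner_xseq_S; assumption).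
  rewrite !hinner_xseq, (Rmult_comm (rhoseq d n)), (Rmult_comm (rhoseq d m)),
    (Rmult_assoc (rhoseq d (S m)) (rhoseq d n)), (Rmult_assoc (rhoseq d (S n)) (rhoseq d m)).
  rewrite (rhoseq_exp_shift d n (tseq d (S m)) Hn),
          (rhoseq_exp_shift d m (tseq d (S n)) Hm).
  fold D.
  replace (tseq d (S m) - tseq d (S n)) with (- D) by (unfold D; ring).
  replace ((- D) ^ 2) with (D ^ 2) by ring.
  replace (2 * - D * d m) with (- (2 * D * d m)) by ring.
  ring.
Qed.

End Vectors.

Lemma hinner_xseq_increments_nonneg (X : RealHilbertSpace) (u : R -> X) (d : nat -> R)
  (Hu : forall s t, 0 <= s -> 0 <= t -> hinner (u s) (u t) = exp (- (s - t) ^ 2))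
  (Hdpos : forall n, (1 <= n)%nat -> 0 < d n)
  (Hdec : forall n, (1 <= n)%nat -> d (S n) <= d n / (1 + 64 * d n ^ 2))
  m n : (1 <= m)%nat -> (m < n)%nat ->
  0 <= hinner (hsub (xseq u d (S m)) (xseq u d (S n)))
              (hsub (hsub (xseq u d m) (xseq u d (S m)))
                    (hsub (xseq u d n) (xseq u d (S n)))).
Proof.
  intros Hm Hmn.
  rewrite hinner_xseq_increments by (assumption || lia).
  set (D := tseq d (S n) - tseq d (S m)).
  pose proof (Hdpos m Hm) as Pm. pose proof (Hdpos n ltac:(lia)) as Pn.
  assert (HD : 0 <= D).
  { pose proof (tseq_le d Hdpos (S m) (S n) ltac:(lia) ltac:(lia)). unfold D. lra. }
  assert (HDgap : D <= tseq d n - tseq d m).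
  { pose proof (d_antitone d Hdpos Hdec m n ltac:(lia) ltac:(lia)). unfold D.
    rewrite !tseq_S by lia. lra. }
  pose proof (tseq_gap_mul_le d Hdpos Hdec m n ltac:(lia) ltac:(lia)) as Gap.
  assert (Hsum : exp (2 * D * d n) + exp (- (2 * D * d m)) <= 2).
  { apply exp_add_exp_opp_le_2; try nra.
    assert (D * d m * d n <= (tseq d n - tseq d m) * d m * d n).
    { apply Rmult_le_compat_r; [lra|]. apply Rmult_le_compat_r; lra. }
    assert (H64 : 64 * (D * d m * d n) <= d m - d n) by lra.
    assert (0 <= D * (D * d m * d n)).
    { apply Rmult_le_pos; [lra|]. apply Rmult_le_pos; [apply Rmult_le_pos|]; lra. }
    assert (2 * D * (64 * (D * d m * d n)) <= 2 * D * (d m - d n))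
      by (apply Rmult_le_compat_l; lra).
    nra. }
  apply Rmult_le_pos; [|lra].
  apply Rmult_le_pos; [apply Rmult_le_pos; left; apply rhoseq_pos | left; apply exp_pos].
Qed.

Theorem lemma6p3 (X : RealHilbertSpace) (u : R -> X) (d : nat -> R)
  (Hu : forall s t, 0 <= s -> 0 <= t -> hinner (u s) (u t) = exp (- (s - t) ^ 2))
  (Hdpos : forall n, (1 <= n)%nat -> 0 < d n)
  (Hsq : exists l, Un_cv (fun N => sum_f_R0 (fun k => d (S k) ^ 2) N) l)
  (Ht : cv_infty (tseq d))
  (Hd1 : d 1%nat <= 1 / 8)
  (Hdec : forall n, (1 <= n)%nat -> d (S n) <= d n / (1 + 64 * d n ^ 2)) :
  (forall m n : nat, (1 <= m)%nat -> (m < n)%nat ->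
     0 <= hinner (hsub (xseq u d (S m)) (xseq u d (S n)))
                 (hsub (hsub (xseq u d m) (xseq u d (S m)))
                       (hsub (xseq u d n) (xseq u d (S n))))) /\
  (forall m : nat, (1 <= m)%nat ->
     0 <= hinner (hsub (xseq u d (S m)) hzero)
                 (hsub (hsub (xseq u d m) (xseq u d (S m)))
                       (hsub (@hzero X) hzero))).
Proof.
  split.
  - exact (hinner_xseq_increments_nonneg X u d Hu Hdpos Hdec).
  - intros m Hm.
    rewrite hinner_sub_increments.
    + rewrite !hinner_zerol, !hinner_zeror. lra.
    + exact (hinner_xseq_S X u d Hu Hdpos m Hm).
    + reflexivity.
Qed.
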